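(* Let $\mathcal X$ and $\mathcal Y$ be measurable spaces. Let $\mathcal M_X$ be an exponential family on $\mathcal X$ with sufficient statistic $\mathbf s_X:\mathcal X\to\mathbb R^{d_X}$, base measure $\nu_X$ and log-partition function $\psi_X(\boldsymbol\theta)=\log\int_{\mathcal X} e^{\mathbf s_X(x)\cdot\boldsymbol\theta}\,\nu_X(dx)$, and let $\mathcal M_Y$ be an exponential family on $\mathcal Y$ with sufficient statistic $\mathbf s_Y:\mathcal Y\to\mathbb R^{d_Y}$, base measure $\nu_Y$ and log-partition function $\psi_Y$. Let $p(x,y)$ be a harmonium with natural parameters $(\boldsymbol\theta_X,\boldsymbol\theta_Y,\boldsymbol\Theta_{XY})$, where $\boldsymbol\theta_X\in\mathbb R^{d_X}$, $\boldsymbol\theta_Y\in\mathbb R^{d_Y}$, $\boldsymbol\Theta_{XY}\in\mathbb R^{d_X\times d_Y}$, i.e. $$p(x,y)=e^{\mathbf s_X(x)\cdot\boldsymbol\theta_X+\mathbf s_Y(y)\cdot\boldsymbol\theta_Y+\mathbf s_X(x)\cdot\boldsymbol\Theta_{XY}\cdot\mathbf s_Y(y)-\psi_{XY}(\boldsymbol\theta_X,\boldsymbol\theta_Y,\boldsymbol\Theta_{XY})}\nu_X(x)\nu_Y(y),$$ with $\psi_{XY}$ the (finite) normalizing log-partition function, and let $p(y)=\int_{\mathcal X}p(x,y)\,dx$ denote its prior (marginal on $\mathcal Y$). Then the following are equivalent: (i) there exists $\boldsymbol\theta^*_Y$ such that $p(y)\propto \nu_Y(y)\,e^{\mathbf s_Y(y)\cdot\boldsymbol\theta^*_Y}$;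 (ii) there exist a vector $\boldsymbol\rho_Y\in\mathbb R^{d_Y}$ and a constant $\rho_0\in\mathbb R$ such that for all $y\in\mathcal Y$, $$\psi_X(\boldsymbol\theta_X+\boldsymbol\Theta_{XY}\cdot\mathbf s_Y(y))=\mathbf s_Y(y)\cdot\boldsymbol\rho_Y+\rho_0 .$$ Moreover, in this case the prior parameters are $\boldsymbol\theta^*_Y=\boldsymbol\theta_Y+\boldsymbol\rho_Y$.
   Context: An exponential family with sufficient statistic $\mathbf s$ and base measure $\nu$ consists of densities $p(x;\boldsymbol\theta)=e^{\mathbf s(x)\cdot\boldsymbol\theta-\psi(\boldsymbol\theta)}\nu(x)$ with natural parameters $\boldsymbol\theta$ and log-partition function $\psi$. A harmonium built from two exponential families is the exponential family on $\mathcal X\times\mathcal Y$ with base measure $\nu_X(x)\nu_Y(y)$ and sufficient statistic $(\mathbf s_X(x),\mathbf s_Y(y),\mathbf s_X(x)\otimes\mathbf s_Y(y))$, as written in the claim. A harmonium satisfying condition (ii) is called conjugated, and $\boldsymbol\rho_Y,\rho_0$ are called its conjugation parameters. *)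

From HB Require Import structures.
From mathcomp Require Import all_boot all_order all_algebra.
From mathcomp Require Import all_classical all_reals all_analysis.
Set Implicit Arguments. Unset Strict Implicit. Unset Printing Implicit Defensive.
Import Order.TTheory GRing.Theory Num.Theory.
Local Open Scope ring_scope.

Definition dotv (R : realType) (n : nat) (u v : 'rV[R]_n) : R := (u *m v^T) 0 0.

Definition bilin (R : realType) (m n : nat) (u : 'rV[R]_m) (M : 'M[R]_(m, n))
  (v : 'rV[R]_n) : R := (u *m M *m v^T) 0 0.

Definition measurable_stat (d : measure_display) (T : measurableType d)
  (R : realType) (n : nat) (s : T -> 'rV[R]_n) : Prop :=
  forall i : 'I_n, measurable_fun setT (fun x => s x 0 i).

Definition log_partition (d : measure_display) (T : measurableType d)
  (R : realType) (n : nat) (mu : {measure set T -> \bar R})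
  (s : T -> 'rV[R]_n) (th : 'rV[R]_n) : \bar R :=
  lne (\int[mu]_x (expR (dotv (s x) th))%:E)%E.

Definition harm_energy (dX dY : measure_display) (X : measurableType dX)
  (Y : measurableType dY) (R : realType) (nX nY : nat)
  (sX : X -> 'rV[R]_nX) (sY : Y -> 'rV[R]_nY)
  (thX : 'rV[R]_nX) (thY : 'rV[R]_nY) (Th : 'M[R]_(nX, nY)) (x : X) (y : Y) : R :=
  dotv (sX x) thX + dotv (sY y) thY + bilin (sX x) Th (sY y).

Definition harm_log_partition (dX dY : measure_display) (X : measurableType dX)
  (Y : measurableType dY) (R : realType) (nX nY : nat)
  (muX : {sigma_finite_measure set X -> \bar R})
  (muY : {sigma_finite_measure set Y -> \bar R})
  (sX : X -> 'rV[R]_nX) (sY : Y -> 'rV[R]_nY)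
  (thX : 'rV[R]_nX) (thY : 'rV[R]_nY) (Th : 'M[R]_(nX, nY)) : \bar R :=
  lne (\int[muX \x muY]_z (expR (harm_energy sX sY thX thY Th z.1 z.2))%:E)%E.

(* Harmonium density p(x,y) with respect to nu_X (x) nu_Y. *)
Definition harm_density (dX dY : measure_display) (X : measurableType dX)
  (Y : measurableType dY) (R : realType) (nX nY : nat)
  (muX : {sigma_finite_measure set X -> \bar R})
  (muY : {sigma_finite_measure set Y -> \bar R})
  (sX : X -> 'rV[R]_nX) (sY : Y -> 'rV[R]_nY)
  (thX : 'rV[R]_nX) (thY : 'rV[R]_nY) (Th : 'M[R]_(nX, nY)) (x : X) (y : Y) : R :=
  expR (harm_energy sX sY thX thY Th x y
        - fine (harm_log_partition muX muY sX sY thX thY Th)).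

Definition harm_prior (dX dY : measure_display) (X : measurableType dX)
  (Y : measurableType dY) (R : realType) (nX nY : nat)
  (muX : {sigma_finite_measure set X -> \bar R})
  (muY : {sigma_finite_measure set Y -> \bar R})
  (sX : X -> 'rV[R]_nX) (sY : Y -> 'rV[R]_nY)
  (thX : 'rV[R]_nX) (thY : 'rV[R]_nY) (Th : 'M[R]_(nX, nY)) (y : Y) : \bar R :=
  (\int[muX]_x (harm_density muX muY sX sY thX thY Th x y)%:E)%E.

(** The prior factorises as
      p(y) = exp(s_Y(y).th_Y - psi_XY) * Z_X(th_X + Th_XY s_Y(y)),
    where Z_X = exp psi_X is the partition function of M_X.  Hence p(y) has
    the exponential-family form c exp(s_Y(y).th') exactly when
    psi_X(th_X + Th_XY s_Y(y)) is affine in s_Y(y), and the slope of that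
    affine map is th' - th_Y. *)
From HB Require Import structures.
From mathcomp Require Import all_boot all_order all_algebra.
From mathcomp Require Import all_classical all_reals all_analysis measurable_realfun.
From mathcomp Require Import lra.
Set Implicit Arguments. Unset Strict Implicit. Unset Printing Implicit Defensive.
Import Order.TTheory GRing.Theory Num.Theory.
Local Open Scope ring_scope.

Lemma dotvD (R : realType) n (u a b : 'rV[R]_n) :
  dotv u (a + b) = dotv u a + dotv u b.
Proof. by rewrite /dotv linearD /= mulmxDr mxE. Qed.

Lemma dotvB (R : realType) n (u a b : 'rV[R]_n) :
  dotv u (a - b) = dotv u a - dotv u b.
Proof. by rewrite /dotv linearB /= mulmxBr !mxE. Qed.

Lemma measurable_expR_dotv d (T : measurableType d) (R : realType) n
    (s : T -> 'rV[R]_n) (v : 'rV[R]_n) :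
  measurable_stat s -> measurable_fun setT (fun x => (expR (dotv (s x) v))%:E).
Proof.
move=> ms; apply/measurable_EFinP; apply: measurableT_comp; first exact: measurable_expR.
have -> : (fun x => dotv (s x) v) = (fun x => \sum_(j < n) s x 0 j * v 0 j).
  by apply/funext => x; rewrite /dotv mxE; apply: eq_bigr => j _; rewrite mxE.
apply: (measurable_sum _ (h := fun j x => s x 0 j * v 0 j)) => j.
by apply: measurable_funM => //; exact: measurable_cst.
Qed.

Lemma lne_eq_EFin (R : realType) (z : \bar R) (r : R) : (0 <= z)%E ->
  lne z = r%:E <-> z = (expR r)%:E.
Proof.
move=> z0; have /eqP zE : expeR (lne z) == z by rewrite lneK_eq.
by split=> [lnz | ->]; [rewrite -zE lnz | exact: (expeRK r%:E)].
Qed.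

Lemma harm_energyE (dX dY : measure_display) (X : measurableType dX)
    (Y : measurableType dY) (R : realType) (nX nY : nat)
    (sX : X -> 'rV[R]_nX) (sY : Y -> 'rV[R]_nY)
    (thX : 'rV[R]_nX) (thY : 'rV[R]_nY) (Th : 'M[R]_(nX, nY)) x y :
  harm_energy sX sY thX thY Th x y =
  dotv (sY y) thY + dotv (sX x) (thX + sY y *m Th^T).
Proof.
rewrite /harm_energy dotvD /bilin /dotv trmx_mul trmxK mulmxA.
by rewrite addrAC addrC.
Qed.

Section HarmoniumPrior.
Variables (R : realType) (dX dY : measure_display).
Variables (X : measurableType dX) (Y : measurableType dY) (nX nY : nat).
Variables (muX : {sigma_finite_measure set X -> \bar R})
          (muY : {sigma_finite_measure set Y -> \bar R}).
Variables (sX : X -> 'rV[R]_nX) (sY : Y -> 'rV[R]_nY).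
Variables (thX : 'rV[R]_nX) (thY : 'rV[R]_nY) (Th : 'M[R]_(nX, nY)).
Hypothesis msX : measurable_stat sX.

Let psi := fine (harm_log_partition muX muY sX sY thX thY Th).

Lemma harm_priorE y :
  harm_prior muX muY sX sY thX thY Th y =
  ((expR (dotv (sY y) thY - psi))%:E *
   \int[muX]_x (expR (dotv (sX x) (thX + sY y *m Th^T)))%:E)%E.
Proof.
rewrite -ge0_integralZl_EFin ?expR_ge0 //; last exact: measurable_expR_dotv.
apply: eq_integral => x _.
by rewrite /harm_density harm_energyE -/psi -EFinM -expRD; congr (expR _)%:E; lra.
Qed.

Lemma harm_prior_expE y (r : R) :
  log_partition muX sX (thX + sY y *m Th^T) = r%:E <->
  harm_prior muX muY sX sY thX thY Th y = (expR (dotv (sY y) thY - psi + r))%:E.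
Proof.
set a := dotv (sY y) thY - psi.
have expa_inj : injective (fun z => (expR a)%:E * z)%E.
  by apply: inc_inj; apply: lee_pmul2l => //; rewrite lte_fin expR_gt0.
rewrite harm_priorE lne_eq_EFin; last first.
  by apply: integral_ge0 => x _; rewrite lee_fin expR_ge0.
by rewrite [expR (a + r)]expRD EFinM; split=> [-> | /expa_inj].
Qed.

End HarmoniumPrior.

Theorem lemma1 (R : realType) (dX dY : measure_display)
  (X : measurableType dX) (Y : measurableType dY) (nX nY : nat)
  (muX : {sigma_finite_measure set X -> \bar R})
  (muY : {sigma_finite_measure set Y -> \bar R})
  (sX : X -> 'rV[R]_nX) (sY : Y -> 'rV[R]_nY)
  (thX : 'rV[R]_nX) (thY : 'rV[R]_nY) (Th : 'M[R]_(nX, nY)) :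
  measurable_stat sX -> measurable_stat sY ->
  (harm_log_partition muX muY sX sY thX thY Th \is a fin_num)%E ->
  ((exists thY' : 'rV[R]_nY, exists c : R, 0 < c /\
      forall y : Y, harm_prior muX muY sX sY thX thY Th y
                    = (c * expR (dotv (sY y) thY'))%:E)
   <->
   (exists (rhoY : 'rV[R]_nY) (rho0 : R), forall y : Y,
      log_partition muX sX (thX + sY y *m Th^T) = (dotv (sY y) rhoY + rho0)%:E))
  /\
  (forall (rhoY : 'rV[R]_nY) (rho0 : R),
     (forall y : Y,
        log_partition muX sX (thX + sY y *m Th^T) = (dotv (sY y) rhoY + rho0)%:E) ->
     exists c : R, 0 < c /\
       forall y : Y, harm_prior muX muY sX sY thX thY Th y
                     = (c * expR (dotv (sY y) (thY + rhoY)))%:E).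
Proof.
move=> msX _ _.
have prior_expE := harm_prior_expE muX muY sY thX thY Th msX.
set psi := fine (harm_log_partition muX muY sX sY thX thY Th) in prior_expE *.
have prior_of_affine rhoY rho0 :
    (forall y, log_partition muX sX (thX + sY y *m Th^T) = (dotv (sY y) rhoY + rho0)%:E) ->
    exists c, 0 < c /\ forall y, harm_prior muX muY sX sY thX thY Th y
                                 = (c * expR (dotv (sY y) (thY + rhoY)))%:E.
  move=> affine; exists (expR (rho0 - psi)); split=> [|y]; first exact: expR_gt0.
  rewrite (proj1 (prior_expE _ _) (affine y)) -expRD dotvD.
  by congr (expR _)%:E; lra.
split=> //; split=> [[thY' [c [c0 prior_exp]]] | [rhoY [rho0 /prior_of_affine]]].
- exists (thY' - thY), (ln c + psi) => y.
  apply/prior_expE; rewrite prior_exp -[c in LHS]lnK ?posrE //.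
  by rewrite -expRD dotvB; congr (expR _)%:E; lra.
- by move=> [c [c0 prior_exp]]; exists (thY + rhoY), c.
Qed.
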